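(* Let $p,q$ be integers with $2\le q<p$ and $q\mid p$, and let $s=\frac{\log q}{\log p}$. For every regular mapping $\tau:\Sigma_q^\ast\to\{-1,0,\ldots,p-2\}$, the associated set $\Lambda(\tau)$ (a regular maximal orthogonal set of $\mu_{p,q}$) satisfies \[ D_s^+(\Lambda(\tau))\le \frac{1}{\left(\frac{q-1}{2(p-1)}\right)^{s}}=\left(\frac{2(p-1)}{q-1}\right)^{s}. \] Moreover, the bound is attained by the canonical set \[ \Lambda_{p,q}=\Big\{\sum_{i=1}^{k}a_i p^{i-1}: a_i\in\{0,1,\ldots,q-1\},\ k\ge 1\Big\}, \] i.e. $D_s^+(\Lambda_{p,q})=\left(\frac{2(p-1)}{q-1}\right)^{s}$.
   Context: $\mu_{p,q}$ denotes the self-similar probability measure on $\mathbb R$ satisfying $\mu=\frac1q\sum_{d\in\mathcal D}\mu\circ f_d^{-1}$ with $f_d(x)=p^{-1}(x+d)$ and $\mathcal D=\frac pq\{0,1,\ldots,q-1\}$. Upper $r$-Beurling density: for a countable $\Lambda\subseteq\mathbb R$ and $r>0$, $D_r^+(\Lambda)=\limsup_{h\to\infty}\sup_{x\in\mathbb R}\frac{\#(\Lambda\cap B(x,h))}{h^r}$, where $B(x,h)=(x-h,x+h)$. Let $\Sigma_q=\{0,1,\ldots,q-1\}$, $\Sigma_q^n$ the words of length $n$, and $\Sigma_q^\ast=\bigcup_{n\ge1}\Sigma_q^n$. A map $\tau:\Sigma_q^\ast\to\{-1,0,\ldots,p-2\}$ is a regular mapping if (i) $\tau(0^n)=0$ for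 all $n\ge1$; (ii) $\tau(i_1\cdots i_n)\in i_n+q\mathbb Z$ for every word $i_1\cdots i_n$; (iii) for every $I\in\Sigma_q^\ast$, $\tau(I0^l)=0$ for all sufficiently large $l$. For $I=i_1\cdots i_n\in\Sigma_q^\ast$ and $k\ge1$, let $I_{1,k}=i_1\cdots i_k$ if $k\le n$ and $I_{1,k}=i_1\cdots i_n0^{k-n}$ if $k>n$, and set $\tau^\ast(I)=\sum_{k=1}^\infty \tau(I_{1,k})p^{k-1}$ (a finite sum by (iii)). Then $\Lambda(\tau)=\{\tau^\ast(I): I\in\Sigma_q^\ast\}\subseteq\mathbb Z$. (Equivalently, writing each $n\ge1$ in base $q$ as $n=i_1+i_2q+\cdots+i_Nq^{N-1}$ with $i_N\ne0$ and $I=i_1\cdots i_N$, $\lambda_n=\tau^\ast(I)$, $\lambda_0=0$, and $\Lambda(\tau)=\{\lambda_n\}_{n\ge0}$.) The canonical set $\Lambda_{p,q}$ equals $\Lambda(\tau)$ for $\tau(i_1\cdots i_n)=i_n$. *)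

From mathcomp Require Import all_boot all_order all_algebra.
From mathcomp Require Import all_classical all_reals all_analysis.
Set Implicit Arguments. Unset Strict Implicit. Unset Printing Implicit Defensive.
Import Order.TTheory GRing.Theory Num.Theory.
Local Open Scope classical_set_scope.
Local Open Scope ring_scope.

(* Words over Sigma_q = {0,..,q-1}: nonempty lists of naturals < q,
   written i_1 ... i_n as the list [:: i_1; ...; i_n]. *)
Definition word (q : nat) (w : seq nat) : Prop := (0 < size w)%N /\ all (fun i => (i < q)%N) w.

(* I_{1,k}: truncation of I to length k, padded with zeros if k > |I|. *)
Definition pre (I : seq nat) (k : nat) : seq nat := take k I ++ nseq (k - size I) 0%N.

Definition regular_mapping (p q : nat) (tau : seq nat -> int) : Prop :=
  [/\ (forall w, word q w -> -1 <= tau w <= (p%:Z - 2)),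
      (forall n, (0 < n)%N -> tau (nseq n 0%N) = 0),
      (forall w, word q w -> (q%:Z %| tau w - (last 0%N w)%:Z)%Z) &
      (forall I, word q I -> exists L, forall l, (L <= l)%N -> tau (I ++ nseq l 0%N) = 0)].

(* tau^*(I) = sum_{k>=1} tau(I_{1,k}) p^{k-1}, a finite sum: lam is tau^*(I)
   iff all terms with k > N vanish and lam is the partial sum up to N. *)
Definition tau_star_is (p : nat) (tau : seq nat -> int) (I : seq nat) (lam : int) : Prop :=
  exists N : nat, (forall k, (N < k)%N -> tau (pre I k) = 0) /\
    lam = \sum_(0 <= k < N) tau (pre I k.+1) * (p%:Z) ^+ k.

Definition Lambda_tau (p q : nat) (tau : seq nat -> int) : set int :=
  [set lam | exists I, word q I /\ tau_star_is p tau I lam].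

Definition Lambda_can (p q : nat) : set int :=
  [set lam | exists a : seq nat, word q a /\
     lam = \sum_(i < size a) (nth 0%N a i)%:Z * (p%:Z) ^+ i].

(* #(Lambda ∩ B(x,h)) for Lambda ⊆ Z (always a finite set here). *)
Definition count_ball (R : realType) (L : set int) (x h : R) : R :=
  \sum_(n \in [set n : int | L n /\ `|n%:~R - x| < h]) (1 : R).

(* Upper r-Beurling density:
   limsup_{h->oo} sup_x #(L ∩ B(x,h)) / h^r
   = inf_{H>0} sup_{h >= H, x in R} #(L ∩ B(x,h)) / h^r, in the extended reals. *)
Definition upper_density (R : realType) (r : R) (L : set int) : \bar R :=
  ereal_inf [set ereal_sup [set ((count_ball L xh.1 xh.2) / (xh.2 `^ r))%:E
                                | xh in [set xh : R * R | H <= xh.2]]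
            | H in [set H : R | 0 < H]].

From mathcomp Require Import all_boot all_order all_algebra finmap.
From mathcomp Require Import all_classical all_reals all_analysis.
From mathcomp Require Import zify ring lra.
Import Order.TTheory GRing.Theory Num.Theory.

Set Implicit Arguments. Unset Strict Implicit. Unset Printing Implicit Defensive.

(* Two points of Lambda(tau) whose words first differ at position k differ by
   p^k m with q not dividing m (condition (ii) of regularity and q | p).  Any
   set of integers with this property inside an interval of length L has at
   most #{N : rebase N <= L} points: split it by residues mod q; inside a class
   all differences are multiples of p, and dividing by p gives a smaller set of
   the same kind.  So the canonical set is extremal, and convexity of y^t,
   t = log p / log q, gives (N + 1)^t <= 1 + (p - 1)/(q - 1) rebase N, whence at
   most (1 + (p - 1)/(q - 1) L)^s points.  Conversely the q^n canonical points
   with n digits lie in an interval of length (q - 1)(p^n - 1)/(p - 1), which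
   attains the bound. *)

Lemma seq_has_min d (T : orderType d) (s : seq T) :
  s != [::] -> exists2 c, c \in s & {in s, forall x, (c <= x)%O}.
Proof.
elim: s => [|x s IH] // _; case: (eqVneq s [::]) => [->|/IH [c cs c_min]].
  by exists x; rewrite ?mem_seq1 // => y; rewrite mem_seq1 => /eqP ->.
have [xc|cx] := leP x c.
  exists x; rewrite ?mem_head // => y; rewrite in_cons => /predU1P [-> //|/c_min].
  exact: le_trans.
exists c; first by rewrite in_cons cs orbT.
by move=> y; rewrite in_cons => /predU1P [->|/c_min //]; apply: ltW.
Qed.

Lemma size_eq_sum_count (T : eqType) (f : T -> nat) q (s : seq T) :
  (forall x, f x < q) -> size s = \sum_(j < q) count (fun x => f x == j) s.
Proof.
move=> f_lt; elim: s => [|x s IH] /=; first by rewrite big1.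
rewrite IH big_split /=.
suff -> : \sum_(j < q) (f x == j :> nat) = 1 by rewrite add1n.
rewrite (bigD1 (Ordinal (f_lt x))) //= eqxx big1 // => i /negbTE.
by rewrite eq_sym -(inj_eq val_inj) /= => ->.
Qed.

(* [rebase p q N] reads the base-[q] digits of [N] in base [p]; for [q <= p]
   these are the points of the canonical set, in increasing order. *)
Fixpoint rebase_rec (p q fuel N : nat) : nat :=
  if fuel is f.+1 then N %% q + p * rebase_rec p q f (N %/ q) else 0.

Definition rebase (p q N : nat) : nat := rebase_rec p q N N.

Definition rebase_count (p q L : nat) : nat :=
  count (fun N => rebase p q N <= L) (iota 0 L.+1).

Definition pq_gap (p q : nat) (d : int) : Prop :=
  exists k, (p ^ k %| `|d|) && ~~ (p ^ k * q %| `|d|).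

Section Rebase.
Variables p q : nat.
Hypothesis q_gt1 : 1 < q.

Lemma rebase_rec0 f : rebase_rec p q f 0 = 0.
Proof. by elim: f => //= f; rewrite mod0n div0n => ->; rewrite muln0. Qed.

Lemma rebase_rec_fuel f f' N : N <= f -> N <= f' ->
  rebase_rec p q f N = rebase_rec p q f' N.
Proof.
have div_lt M : M.+1 %/ q < M.+1 by rewrite ltn_Pdiv // ltnW.
elim: f f' N => [|f IH] [|f'] [|N] //= Nf Nf';
  rewrite ?mod0n ?div0n ?rebase_rec0 ?muln0 //; congr (_ + p * _).
by apply: IH; rewrite -ltnS (leq_trans (div_lt N)).
Qed.

Lemma rebaseE N : rebase p q N = N %% q + p * rebase p q (N %/ q).
Proof.
case: N => [|N]; rewrite /rebase /= ?mod0n ?div0n ?rebase_rec0 ?muln0 //.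
by congr (_ + p * _); apply: rebase_rec_fuel; rewrite // -ltnS ltn_Pdiv // ltnW.
Qed.

Lemma rebase_digit j N : j < q -> rebase p q (j + q * N) = j + p * rebase p q N.
Proof.
move=> jq; rewrite rebaseE [j + _]addnC mulnC modnMDl modn_small //.
by rewrite divnMDl ?(ltnW q_gt1) // divn_small // addn0.
Qed.

Lemma rebase_sum n N : N < q ^ n ->
  rebase p q N = \sum_(i < n) (N %/ q ^ i %% q) * p ^ i.
Proof.
elim: n N => [|n IH] N N_lt.
  by move: N_lt; rewrite expn0 ltnS leqn0 => /eqP ->; rewrite big_ord0.
rewrite rebaseE big_ord_recl /= expn0 divn1 muln1 IH; last first.
  by rewrite ltn_divLR ?expn_gt0 ?(ltnW q_gt1) // mulnC -expnS.
by rewrite big_distrr; congr (_ + _); apply: eq_bigr => i _; rewrite !expnS divnMA mulnCA.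
Qed.

Hypothesis q_le_p : q <= p.

Lemma leq_rebase N : N <= rebase p q N.
Proof.
elim/ltn_ind: N => [[|N] IH] //; rewrite rebaseE.
have := leq_mul q_le_p (IH _ (ltn_Pdiv q_gt1 (ltn0Sn N))).
have := divn_eq N.+1 q; lia.
Qed.

Lemma rebase_modp N : rebase p q N %% p = N %% q.
Proof.
have Nq := ltn_pmod N (ltnW q_gt1).
rewrite rebaseE addnC mulnC modnMDl modn_small //; lia.
Qed.

Lemma rebase_divp N : rebase p q N %/ p = rebase p q (N %/ q).
Proof.
rewrite rebaseE addnC mulnC divnMDl; last lia.
have Nq := ltn_pmod N (ltnW q_gt1); rewrite (@divn_small (N %% q)) ?addn0 //; lia.
Qed.

Lemma rebase_inj : injective (rebase p q).
Proof.
move=> N; elim/ltn_ind: N => N IH M eq_NM.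
case: (posnP N) => [N0|N_gt0].
  by move: (leq_rebase M); rewrite -eq_NM N0 /rebase /=; lia.
have eq_mod : N %% q = M %% q by rewrite -!rebase_modp eq_NM.
have eq_div : N %/ q = M %/ q by apply: IH; rewrite ?ltn_Pdiv // -!rebase_divp eq_NM.
by rewrite (divn_eq N q) (divn_eq M q) eq_mod eq_div.
Qed.

Lemma rebase_count_residue j L : j < q -> j <= L ->
  rebase_count p q ((L - j) %/ p)
  <= count (fun N => (N %% q == j) && (rebase p q N <= L)) (iota 0 L.+1).
Proof.
move=> jq jL; have p_gt0 : 0 < p by lia.
set M := (L - j) %/ p; pose h N := j + q * N.
have h_inj : injective h by move=> a b /eqP; rewrite eqn_add2l eqn_mul2l; lia.
rewrite /rebase_count -!size_filter -(size_map h).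
apply: uniq_leq_size; first by rewrite map_inj_uniq // filter_uniq // iota_uniq.
move=> y /mapP [N]; rewrite mem_filter => /andP [N_le _] ->.
have pM_le : p * M <= L - j by rewrite mulnC leq_trunc_div.
have qN_le : q * N <= p * rebase p q N := leq_mul q_le_p (leq_rebase N).
have pN_le : p * rebase p q N <= p * M by rewrite leq_mul2l N_le orbT.
rewrite mem_filter mem_iota /h rebase_digit // addnC mulnC modnMDl modn_small // eqxx /=.
lia.
Qed.

End Rebase.

Lemma pq_gap_dvdp p q d : q %| p -> pq_gap p q d -> q %| `|d| -> p %| `|d|.
Proof.
move=> qp [[|k] /andP [pk_d not_d]] q_d; first by rewrite expn0 mul1n q_d in not_d.
by apply: dvdn_trans pk_d; rewrite expnS dvdn_mulr.
Qed.

Lemma pq_gap_mull p q d : 0 < p -> q %| p -> pq_gap p q (p%:Z * d) -> pq_gap p q d.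
Proof.
move=> p_gt0 qp [[|k]]; rewrite abszM absz_nat.
  by rewrite expn0 mul1n (dvdn_trans qp (dvdn_mulr _ (dvdnn p))) => /andP [].
by rewrite expnS dvdn_pmul2l // -mulnA dvdn_pmul2l // => ?; exists k.
Qed.

Section GapSets.
Variables p q : nat.
Hypotheses (q_gt1 : 1 < q) (q_le_p : q <= p) (q_dvd_p : q %| p).

Lemma pq_gap_residue (s : seq nat) c : c \in s ->
  {in s &, forall x y, x != y -> pq_gap p q (x%:Z - y%:Z)} ->
  {in s, forall x, c <= x -> x = c %[mod q] -> x = c + p * ((x - c) %/ p)}.
Proof.
move=> cs s_gap x xs cx xc.
suff p_dvd : p %| x - c by rewrite mulnC divnK // subnKC.
have [->|x_neq] := eqVneq x c; first by rewrite subnn dvdn0.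
have := pq_gap_dvdp q_dvd_p (s_gap _ _ xs cs x_neq).
by rewrite (distnEl cx); apply; rewrite -eqn_mod_dvd // xc.
Qed.

Lemma pq_gap_size_le L (s : seq nat) : uniq s -> all (leq^~ L) s ->
  {in s &, forall x y, x != y -> pq_gap p q (x%:Z - y%:Z)} ->
  size s <= rebase_count p q L.
Proof.
have p_gt0 : 0 < p by lia.
elim/ltn_ind: L s => L IH s s_uniq s_le s_gap.
have [L0|L_gt0] := posnP L.
  have s_sub : {subset s <= [:: 0]}.
    by move=> x /(allP s_le); rewrite L0 leqn0 mem_seq1.
  by rewrite L0; have := uniq_leq_size s_uniq s_sub.
have mod_lt x : x %% q < q by rewrite ltn_mod ltnW.
rewrite (@size_eq_sum_count _ _ _ s mod_lt) /rebase_count -size_filter.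
rewrite (size_eq_sum_count _ mod_lt); apply: leq_sum => j _; rewrite count_filter.
set sj := seq.filter (fun x => x %% q == j) s; rewrite -size_filter -/sj.
have [->//|sj_nil] := eqVneq sj [::].
have [c cs c_min] := seq_has_min sj_nil.
have [cj c_s] : c %% q = j /\ c \in s by move: cs; rewrite mem_filter => /andP [/eqP].
have jc : j <= c by rewrite -cj leq_mod.
have cL : c <= L := allP s_le c c_s.
have sj_s : {subset sj <= s} by move=> x; rewrite mem_filter => /andP [].
have sj_gap := sub_in2 sj_s s_gap.
have decomp : {in sj, forall x, x = c + p * ((x - c) %/ p)}.
  move=> x xs; apply: (pq_gap_residue cs sj_gap xs (c_min x xs)).
  by move: xs; rewrite mem_filter cj => /andP [/eqP].
rewrite -(size_map (fun x => (x - c) %/ p)).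
apply: leq_trans (rebase_count_residue q_gt1 q_le_p (ltn_ord j) (leq_trans jc cL)).
apply: IH.
- apply: leq_ltn_trans (leq_div2r _ (leq_subr j L)) _; rewrite ltn_Pdiv //; lia.
- rewrite map_inj_in_uniq ?filter_uniq // => x y xs ys eq_xy.
  by rewrite (decomp x xs) (decomp y ys) eq_xy.
- apply/allP => _ /mapP [x xs ->]; apply: leq_div2r.
  by have := allP s_le x (sj_s x xs); lia.
move=> _ _ /mapP [x xs ->] /mapP [y ys ->] neq.
have xy : x != y by apply: contraNneq neq => ->.
apply: (pq_gap_mull p_gt0 q_dvd_p).
suff -> : (p%:Z * (((x - c) %/ p)%:Z - ((y - c) %/ p)%:Z) = x%:Z - y%:Z)%R by apply: sj_gap.
by rewrite {2}(decomp x xs) {2}(decomp y ys) !PoszD !PoszM; ring.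
Qed.

End GapSets.

Local Open Scope classical_set_scope.
Local Open Scope ring_scope.

Lemma powR_convex (R : realType) (t l u v : R) :
  1 <= t -> 0 <= u -> 0 <= v -> 0 <= l -> l <= 1 ->
  (l * v + (1 - l) * u) `^ t <= l * v `^ t + (1 - l) * u `^ t.
Proof.
move=> t1 u0 v0 l0 l1.
have := @convex_powR R t t1 (Itv01 l0 l1) v u.
by rewrite !inE /= !in_itv /= !andbT convRE => /(_ v0 u0).
Qed.

Lemma powRD_sub1 (R : realType) (t u v : R) : 1 <= t -> 1 <= u -> 1 <= v ->
  u `^ t + v `^ t <= (u + v - 1) `^ t + 1.
Proof.
move=> t1 u1 v1; set X := u + v - 1.
have [X1|X_gt1] : X = 1 \/ 1 < X by rewrite /X; lra.
  have [-> ->] : u = 1 /\ v = 1 by move: X1; rewrite /X; split; lra.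
  by rewrite X1 powR1.
pose mu := (u - 1) / (X - 1).
have mu0 : 0 <= mu by apply: divr_ge0; lra.
have mu1 : mu <= 1 by rewrite ler_pdivrMr ?subr_gt0 // mul1r /X; lra.
have X1_neq0 : X - 1 != 0 by rewrite subr_eq0 gt_eqF.
have muX : mu * (X - 1) = u - 1 by rewrite /mu mulfVK.
have uE : u = mu * X + (1 - mu) * 1 by lra.
have vE : v = (1 - mu) * X + (1 - (1 - mu)) * 1 by move: muX; rewrite /X; lra.
have := powR_convex t1 ler01 (ltW (lt_trans ltr01 X_gt1)) mu0 mu1.
have := @powR_convex R t (1 - mu) 1 X t1 ler01 (ltW (lt_trans ltr01 X_gt1)).
by rewrite -uE -vE powR1; lra.
Qed.

Lemma powR_lnratio (R : realType) (p q : nat) : (1 < q)%N -> (0 < p)%N ->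
  (q%:R : R) `^ (ln (p%:R : R) / ln q%:R) = p%:R.
Proof.
move=> q_gt1 p_gt0; have lnq_neq0 : ln (q%:R : R) != 0 by rewrite gt_eqF // ln_gt0 // ltr1n.
by rewrite /powR gt_eqF ?ltr0n 1?ltnW // mulfVK // lnK // posrE ltr0n.
Qed.

Section RebaseGrowth.
Variables (R : realType) (p q : nat).
Hypotheses (q_gt1 : (1 < q)%N) (q_le_p : (q <= p)%N).

Let t : R := ln p%:R / ln q%:R.
Let beta : R := (p%:R - 1) / (q%:R - 1).

Lemma rebase_growth N : (N.+1)%:R `^ t <= 1 + beta * (rebase p q N)%:R.
Proof.
have p_gt0 : (0 < p)%N by lia.
have t_ge1 : 1 <= t.
  rewrite /t ler_pdivlMr ?mul1r ?ln_gt0 ?ltr1n //.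
  by rewrite ler_ln ?posrE ?ltr0n ?ler_nat //; lia.
have q1_gt0 : (0 : R) < q%:R - 1 by rewrite subr_gt0 ltr1n.
elim/ltn_ind: N => N IH; have [->|N_gt0] := posnP N.
  by rewrite powR1 /= mulr0 addr0.
set a := (N %% q)%N; set N' := (N %/ q)%N.
have a_lt : (a < q)%N by rewrite ltn_mod ltnW.
have IH' := IH N' (ltn_Pdiv q_gt1 N_gt0).
pose x : R := (N'.+1)%:R; pose X := q%:R * x; pose Y := X - (q%:R - 1).
have x_ge1 : 1 <= x by rewrite ler1n.
have q_ge1 : (1 : R) <= q%:R by rewrite ler1n ltnW.
have X_ge1 : 1 <= X by rewrite /X; nra.
have Y_ge1 : 1 <= Y by rewrite /Y /X; nra.
pose lam : R := a%:R / (q%:R - 1).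
have lam0 : 0 <= lam by rewrite divr_ge0 // ltW.
have lam1 : lam <= 1 by rewrite ler_pdivrMr // mul1r lerBrDr natr1 ler_nat.
(* [N + 1] splits as a convex combination of [Y] and [X = q (N' + 1)]. *)
have N1E : (N.+1)%:R = lam * X + (1 - lam) * Y.
  by rewrite /Y /lam /X /x {1}(divn_eq N q) -addn1 !natrD natrM; field; rewrite gt_eqF.
have chord := powR_convex t_ge1 (le_trans ler01 Y_ge1) (le_trans ler01 X_ge1) lam0 lam1.
rewrite -N1E in chord.
have swap : Y `^ t + p%:R <= X `^ t + 1.
  have YqE : Y + q%:R - 1 = X by rewrite /Y; ring.
  by have := powRD_sub1 t_ge1 Y_ge1 q_ge1; rewrite YqE powR_lnratio.
have XE : X `^ t = p%:R * x `^ t by rewrite powRM ?ler0n ?powR_lnratio.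
have lamE : lam * (p%:R - 1) = beta * a%:R by rewrite /lam /beta; field; rewrite gt_eqF.
have Y_le : (1 - lam) * Y `^ t <= (1 - lam) * (X `^ t + 1 - p%:R).
  by apply: ler_wpM2l; lra.
have x_le : p%:R * x `^ t <= p%:R * (1 + beta * (rebase p q N')%:R).
  by apply: ler_wpM2l; rewrite ?ler0n.
rewrite rebaseE // natrD natrM; lra.
Qed.

Lemma rebase_count_le L :
  (rebase_count p q L)%:R <= (1 + beta * L%:R) `^ (ln q%:R / ln p%:R).
Proof.
have lnq_gt0 : (0 : R) < ln q%:R by rewrite ln_gt0 // ltr1n.
have lnp_gt0 : (0 : R) < ln p%:R by rewrite ln_gt0 // ltr1n; lia.
set s := ln _ / _; set B := (1 + beta * L%:R) `^ s.
have ts : t * s = 1 by rewrite /t /s; field; rewrite !gt_eqF.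
have beta_ge0 : 0 <= beta by rewrite divr_ge0 // subr_ge0 ler1n; lia.
rewrite /rebase_count -size_filter.
apply: (@le_trans _ _ (Num.truncn B)%:R); last by rewrite truncn_le powR_ge0.
rewrite ler_nat -[leqRHS](size_iota 0); apply: uniq_leq_size; first by rewrite filter_uniq ?iota_uniq.
move=> N; rewrite mem_filter => /andP [NL _].
rewrite mem_iota add0n /= truncn_ge_nat ?powR_ge0 //.
have N1_le : (N.+1)%:R `^ t <= 1 + beta * L%:R.
  by apply: le_trans (rebase_growth N) _; rewrite lerD2l ler_wpM2l ?ler_nat.
have := @ge0_ler_powR R s (divr_ge0 (ltW lnq_gt0) (ltW lnp_gt0)) _ _ _ _ N1_le.
rewrite -powRrM ts powRr1 ?ler0n //; apply; rewrite nnegrE ?powR_ge0 //.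
by apply: addr_ge0 => //; apply: mulr_ge0; rewrite ?ler0n.
Qed.

End RebaseGrowth.

Lemma sumr_expr_prefix0 (R : comRingType) (f : nat -> R) (x : R) k M :
  (k < M)%N -> (forall i, (i < k)%N -> f i = 0) ->
  exists r, \sum_(0 <= i < M) f i * x ^+ i = x ^+ k * (f k + x * r).
Proof.
move=> kM f0; exists (\sum_(k.+1 <= i < M) f i * x ^+ (i - k.+1)).
rewrite (big_cat_nat (leq0n k) (ltnW kM)) /= big1_seq ?add0r; last first.
  by move=> i /andP [_]; rewrite mem_index_iota => /andP [_ /f0 ->]; rewrite mul0r.
rewrite big_ltn // mulrDr !mulr_sumr [x ^+ k * _]mulrC; congr (_ + _).
by apply: eq_big_nat => i /andP [ki _]; rewrite -[X in x ^+ X](subnKC ki) exprD exprS; ring.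
Qed.

Lemma preE (I : seq nat) k : pre I k = mkseq (nth 0%N I) k.
Proof.
apply: (@eq_from_nth _ 0%N) => [|i].
  by rewrite size_mkseq /pre size_cat size_take size_nseq; case: (ltnP k (size I)); lia.
rewrite /pre size_cat size_take size_nseq => i_lt.
have ik : (i < k)%N by move: i_lt; case: (ltnP k (size I)); lia.
rewrite nth_mkseq // nth_cat size_take; case: (ltnP k (size I)) => kI.
  by rewrite ik nth_take.
case: (ltnP i (size I)) => iI; first by rewrite nth_take.
by rewrite nth_nseq nth_default //; case: ifP.
Qed.

Lemma last_pre (I : seq nat) k : last 0%N (pre I k.+1) = nth 0%N I k.
Proof. by rewrite preE -nth_last size_mkseq nth_mkseq. Qed.

Lemma eq_pre (I I' : seq nat) k :
  (forall i, (i < k)%N -> nth 0%N I i = nth 0%N I' i) -> pre I k = pre I' k.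
Proof.
by move=> eqII'; rewrite !preE; apply/eq_in_map => i; rewrite mem_iota => /andP [_ /eqII'].
Qed.

Lemma word_nth q (I : seq nat) k : word q I -> (0 < q)%N -> (nth 0%N I k < q)%N.
Proof.
move=> [_ /allP I_lt] q_gt0; have [kI|Ik] := ltnP k (size I).
  by apply: I_lt; rewrite mem_nth.
by rewrite nth_default.
Qed.

Lemma word_pre q (I : seq nat) k : word q I -> (0 < q)%N -> word q (pre I k.+1).
Proof.
move=> wI q_gt0; split; rewrite preE ?size_mkseq //.
by apply/allP => _ /mapP [i _ ->]; apply: word_nth.
Qed.

Lemma tau_star_isE p tau (I : seq nat) lam : tau_star_is p tau I lam ->
  exists N, forall M, (N <= M)%N ->
    lam = \sum_(0 <= k < M) tau (pre I k.+1) * (p%:Z) ^+ k.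
Proof.
move=> [N [tau0 ->]]; exists N => M NM.
rewrite (big_cat_nat _ NM) //= [X in _ = _ + X]big1_seq ?addr0 // => k /andP [_].
by rewrite mem_index_iota => /andP [Nk _]; rewrite tau0 ?mul0r.
Qed.

Lemma digit_congr_eq q a b :
  (a < q)%N -> (b < q)%N -> (q%:Z %| a%:Z - b%:Z)%Z -> a = b.
Proof.
move=> aq bq; rewrite dvdzE absz_nat; have [//|ab] := eqVneq a b.
by move/dvdn_leq; rewrite lt0n distn_eq0 ab => /(_ isT); lia.
Qed.

Lemma Lambda_tau_gap p q tau x y : (1 < q)%N -> (0 < p)%N -> (q %| p)%N ->
  (forall w, word q w -> (q%:Z %| tau w - (last 0%N w)%:Z)%Z) ->
  Lambda_tau p q tau x -> Lambda_tau p q tau y -> x != y -> pq_gap p q (x - y).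
Proof.
move=> q_gt1 p_gt0 q_dvd_p tau_digit [I [wI tauI]] [I' [wI' tauI']] xy.
have q_gt0 : (0 < q)%N by lia.
have [N NE] := tau_star_isE tauI; have [N' N'E] := tau_star_isE tauI'.
have ex_neq : exists k, nth 0%N I k != nth 0%N I' k.
  apply: contrapT => all_eq; move/eqP: xy; apply.
  have eqII' i : nth 0%N I i = nth 0%N I' i.
    by apply/eqP; apply: contrapT => ne; apply: all_eq; exists i; apply/negP.
  rewrite (NE _ (leq_maxl N N')) (N'E _ (leq_maxr N N')).
  by apply: eq_bigr => k _; rewrite (@eq_pre I I' k.+1).
have [k neq k_min] := ex_minnP ex_neq.
have below i : (i < k)%N -> nth 0%N I i = nth 0%N I' i.
  by move=> ik; apply: contraTeq ik => /k_min; rewrite leqNgt.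
pose M := maxn (maxn N N') k.+1.
rewrite (NE M) ?(N'E M) /M ?leq_max ?leqnn ?orbT // -sumrB.
under eq_bigr do rewrite -mulrBl.
have kM : (k < M)%N by rewrite /M leq_max ltnSn orbT.
have tau_eq i : (i < k)%N -> tau (pre I i.+1) - tau (pre I' i.+1) = 0.
  by move=> ik; rewrite (@eq_pre I I') ?subrr // => j jk; apply: below; lia.
have [r ->] := sumr_expr_prefix0 p%:Z kM tau_eq.
set W := _ + _; exists k; rewrite abszM abszX absz_nat dvdn_mulr //=.
rewrite dvdn_pmul2l ?expn_gt0 ?p_gt0 //; apply/negP => q_dvd_W.
have q_dvd_tau : (q%:Z %| tau (pre I k.+1) - tau (pre I' k.+1))%Z.
  have q_dvd_pr : (q%:Z %| p%:Z * r)%Z by apply: dvdz_mulr; rewrite dvdzE !absz_nat.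
  by rewrite -[_ - _](addrK (p%:Z * r)) rpredB // dvdzE absz_nat.
move/eqP: neq; apply; apply: (digit_congr_eq (word_nth k wI q_gt0) (word_nth k wI' q_gt0)).
have := tau_digit _ (word_pre k wI q_gt0); have := tau_digit _ (word_pre k wI' q_gt0).
rewrite !last_pre => d' d.
rewrite [_ - _](_ : _ = (tau (pre I k.+1) - tau (pre I' k.+1)) - (tau (pre I k.+1)
  - (nth 0%N I k)%:Z) + (tau (pre I' k.+1) - (nth 0%N I' k)%:Z)); last ring.
by apply: rpredD => //; apply: rpredB.
Qed.

Lemma Lambda_can_sub p q : Lambda_can p q `<=` Lambda_tau p q (fun w => (last 0%N w)%:Z).
Proof.
move=> _ [a [wa ->]]; exists a; split => //; exists (size a); split.
  by case=> [//|k] ka; rewrite last_pre nth_default.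
by rewrite big_mkord; apply: eq_bigr => i _; rewrite last_pre.
Qed.

Lemma int_ball_finite (R : realType) (L : set int) (x h : R) :
  finite_set [set n : int | L n /\ `|n%:~R - x| < h].
Proof.
pose K := Num.truncn (`|x| + `|h|).
apply: (@sub_finite_set _ _ [set` [seq k%:Z - K%:Z | k <- iota 0 (K + K).+1]]);
  last exact: finite_seq.
move=> n [_ nh]; change (n \in [seq k%:Z - K%:Z | k <- iota 0 (K + K).+1]).
have nK : (`|n| <= K)%N.
  rewrite /K truncn_ge_nat ?addr_ge0 // natr_absz intr_norm.
  have : `|n%:~R| <= `|n%:~R - x| + `|x| :> R by rewrite -{1}(subrK x n%:~R) ler_normD.
  have : `|n%:~R - x| < `|h| :> R by apply: lt_le_trans nh (ler_norm h).
  lra.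
by apply/mapP; exists (absz (n + K%:Z)); [rewrite mem_iota /=|]; lia.
Qed.

Lemma fsum1 (R : numDomainType) (T : choiceType) (D : set T) : finite_set D ->
  \sum_(n \in D) (1 : R) = (size (fset_set D : seq T))%:R.
Proof. by move=> fD; rewrite fsbig_finite // big_const_seq count_predT iter_addr_0. Qed.

Lemma powR_affine_le (R : realType) (c s e : R) :
  0 < c -> 0 <= s -> s <= 1 -> 0 < e ->
  exists2 H, 0 < H & forall h, H <= h -> (1 + c * h) `^ s <= (c `^ s + e) * h `^ s.
Proof.
move=> c_gt0 s_ge0 s_le1 e_gt0; have cs_gt0 : 0 < c `^ s by apply: powR_gt0.
(* [H] is chosen so that [c ^ s / (c H) <= e]. *)
pose H := c `^ s / (c * e) + 1.
have H_gt0 : 0 < H.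
  by have := divr_ge0 (ltW cs_gt0) (mulr_ge0 (ltW c_gt0) (ltW e_gt0)); rewrite /H; lra.
exists H => // h Hh; have h_gt0 : 0 < h := lt_le_trans H_gt0 Hh.
have inv_ge0 y : 0 < y -> 0 <= c + y^-1.
  by move=> y_gt0; rewrite addr_ge0 ?invr_ge0 // ltW.
have -> : 1 + c * h = h * (c + h^-1) by rewrite mulrDr mulfV ?gt_eqF //; ring.
rewrite powRM ?(ltW h_gt0) ?inv_ge0 // [leLHS]mulrC ler_wpM2r ?powR_ge0 //.
have -> : c `^ s + e = c `^ s * (1 + (c * H)^-1) + (e - c `^ s / (c * H)).
  by rewrite mulrDr mulr1 invfM mulrA; ring.
apply: (@le_trans _ _ (c `^ s * (1 + (c * H)^-1))); last first.
  rewrite lerDl subr_ge0 ler_pdivrMr ?mulr_gt0 //.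
  have -> : e * (c * H) = c `^ s + e * c by rewrite /H; field; rewrite !gt_eqF.
  by rewrite lerDl mulr_ge0 // ltW.
have cH_inv_ge0 : 0 <= (c * H)^-1 by rewrite invr_ge0 mulr_ge0 // ltW.
apply: (@le_trans _ _ ((c + H^-1) `^ s)).
  by apply: ge0_ler_powR; rewrite ?nnegrE ?inv_ge0 // lerD2l lef_pV2 ?posrE.
have -> : c + H^-1 = c * (1 + (c * H)^-1).
  by rewrite mulrDr mulr1 invfM mulrA mulfV ?gt_eqF // mul1r.
rewrite powRM ?(ltW c_gt0) ?addr_ge0 // ler_wpM2l ?powR_ge0 //.
by rewrite ler1_powR // lerDl.
Qed.

Section UpperBound.
Variables (R : realType) (p q : nat).
Hypotheses (q_gt1 : (1 < q)%N) (q_le_p : (q <= p)%N) (q_dvd_p : (q %| p)%N).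
Variable L : set int.
Hypothesis L_gap : forall a b, L a -> L b -> a != b -> pq_gap p q (a - b).

Let s : R := ln q%:R / ln p%:R.
Let beta : R := (p%:R - 1) / (q%:R - 1).

Lemma count_ball_gap_le x h : 0 <= h -> count_ball L x h <= (1 + beta * (2 * h)) `^ s.
Proof.
move=> h_ge0; have beta_ge0 : 0 <= beta by rewrite divr_ge0 // subr_ge0 ler1n; lia.
have fD := int_ball_finite L x h.
rewrite /count_ball fsum1 //; set S := fset_set _ : seq int.
have S_ball n : n \in S -> L n /\ `|n%:~R - x| < h by rewrite /S in_fset_set // inE.
have [->|S_nil] := eqVneq S [::]; first by rewrite powR_ge0.
have [m mS m_min] := seq_has_min S_nil.
have nmE n : n \in S -> (`|n - m|%N)%:Z = n - m.
  by move=> nS; rewrite gez0_abs // subr_ge0 m_min.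
pose K := Num.truncn (2 * h).
apply: (@le_trans _ _ (rebase_count p q K)%:R).
  rewrite ler_nat -(size_map (fun n => `|n - m|%N)).
  apply: pq_gap_size_le => //.
  - rewrite map_inj_in_uniq ?fset_uniq // => a b aS bS eq_ab.
    by apply: (addIr (- m)); rewrite -nmE // eq_ab nmE.
  - apply/allP => _ /mapP [n nS ->]; rewrite /K truncn_ge_nat ?mulr_ge0 //.
    rewrite -[_%:R]/((`|n - m|%N)%:Z)%:~R nmE // rmorphB /=.
    have [_] := S_ball n nS; have [_] := S_ball m mS; rewrite !ltr_norml; lra.
  - move=> _ _ /mapP [n nS ->] /mapP [n' n'S ->] neq.
    have nn' : n != n' by apply: contraNneq neq => ->.
    rewrite !nmE // (_ : n - m - (n' - m) = n - n'); last by ring.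
    exact: L_gap (S_ball n nS).1 (S_ball n' n'S).1 nn'.
apply: le_trans (rebase_count_le R q_gt1 q_le_p K) _.
have s_ge0 : 0 <= s by rewrite divr_ge0 // ln_ge0 // ler1n; lia.
apply: ge0_ler_powR; rewrite -/beta ?nnegrE //.
- by rewrite addr_ge0 // mulr_ge0 // ler0n.
- by apply: addr_ge0 => //; apply: mulr_ge0 => //; apply: mulr_ge0.
- by rewrite lerD2l ler_wpM2l // truncn_le mulr_ge0.
Qed.

Lemma upper_density_gap_le :
  (upper_density s L <= ((2 * (p%:R - 1) / (q%:R - 1)) `^ s)%:E)%E.
Proof.
have lnq_gt0 : (0 : R) < ln q%:R by rewrite ln_gt0 // ltr1n.
have lnp_gt0 : (0 : R) < ln p%:R by rewrite ln_gt0 // ltr1n; lia.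
have s_ge0 : 0 <= s by rewrite divr_ge0 // ltW.
have s_le1 : s <= 1 by rewrite ler_pdivrMr // mul1r ler_ln ?posrE ?ltr0n ?ler_nat //; lia.
set c := 2 * _ / _.
have c_gt0 : 0 < c by rewrite divr_gt0 ?mulr_gt0 // subr_gt0 ltr1n //; lia.
apply/lee_addgt0Pr => e e_gt0.
have [H H_gt0 H_le] := powR_affine_le c_gt0 s_ge0 s_le1 e_gt0.
apply: ge_ereal_inf; eexists; first by exists H.
apply: ge_ereal_sup => _ [[x h] /= Hh <-]; have h_gt0 := lt_le_trans H_gt0 Hh.
rewrite lee_fin ler_pdivrMr ?powR_gt0 //.
apply: le_trans (count_ball_gap_le x (ltW h_gt0)) _.
by rewrite (_ : beta * (2 * h) = c * h) ?H_le // /beta /c; ring.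
Qed.

End UpperBound.

Section LowerBound.
Variables p q : nat.
Hypotheses (q_gt1 : (1 < q)%N) (q_le_p : (q <= p)%N).

Lemma rebase_Lambda_can n N : (0 < n)%N -> (N < q ^ n)%N ->
  Lambda_can p q (rebase p q N)%:Z.
Proof.
move=> n_gt0 N_lt; exists [seq N %/ q ^ i %% q | i <- iota 0 n]%N; split.
  split; first by rewrite size_map size_iota.
  by apply/allP => _ /mapP [i _ ->]; rewrite ltn_mod ltnW.
rewrite (rebase_sum p q_gt1 N_lt) size_map size_iota -natz natr_sum.
apply: eq_bigr => i _; rewrite (nth_map 0%N) ?size_iota // nth_iota //.
by rewrite add0n natrM natrX !natz.
Qed.

Lemma rebase_le_max (R : realDomainType) n N : (N < q ^ n)%N ->
  (p%:R - 1) * (rebase p q N)%:R <= (q%:R - 1) * ((p ^ n)%:R - 1) :> R.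
Proof.
elim: n N => [|n IH] N N_lt.
  by move: N_lt; rewrite expn0 ltnS leqn0 => /eqP ->; rewrite expn0 subrr mulr0.
have := IH (N %/ q)%N; rewrite ltn_divLR ?expn_gt0 ?(ltnW q_gt1) // mulnC -expnS.
move=> /(_ N_lt) IH'; rewrite rebaseE // expnS natrD !natrM.
have a_le : ((N %% q)%N%:R <= q%:R - 1 :> R) by rewrite lerBrDr natr1 ler_nat ltn_mod ltnW.
have p_ge1 : (1 <= p%:R :> R) by rewrite ler1n; lia.
have h1 : 0 <= (p%:R - 1) * (q%:R - 1 - (N %% q)%N%:R) :> R by rewrite mulr_ge0 ?subr_ge0.
have h2 : 0 <= p%:R * ((q%:R - 1) * ((p ^ n)%:R - 1) - (p%:R - 1) * (rebase p q (N %/ q))%:R) :> R.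
  by rewrite mulr_ge0 ?ler0n ?subr_ge0.
lra.
Qed.

Lemma count_ball_can_ge (R : realType) n (rho : R) : (0 < n)%N ->
  let lam := (q%:R - 1) * ((p ^ n)%:R - 1) / (p%:R - 1) in
  lam < 2 * rho -> (q ^ n)%:R <= count_ball (Lambda_can p q) (lam / 2) rho.
Proof.
move=> n_gt0 lam lam_lt; have p1_gt0 : (0 : R) < p%:R - 1 by rewrite subr_gt0 ltr1n; lia.
have fD := int_ball_finite (Lambda_can p q) (lam / 2) rho.
rewrite /count_ball fsum1 // ler_nat.
rewrite -(size_iota 0 (q ^ n)) -(size_map (fun N => (rebase p q N)%:Z)).
apply: uniq_leq_size.
  by rewrite map_inj_uniq ?iota_uniq // => a b [] /(rebase_inj q_gt1 q_le_p).
move=> z /mapP [N]; rewrite mem_iota add0n => /andP [_ N_lt] ->.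
rewrite in_fset_set // inE; split; first exact: rebase_Lambda_can N_lt.
have rebase_ge0 : (0 : R) <= (rebase p q N)%:R by rewrite ler0n.
have rebase_le : (rebase p q N)%:R <= lam.
  by rewrite ler_pdivlMr // mulrC; apply: rebase_le_max.
rewrite -[_%:~R]/(rebase p q N)%:R ltr_norml; lra.
Qed.

Lemma upper_density_can_ge (R : realType) :
  (((2 * (p%:R - 1) / (q%:R - 1)) `^ (ln q%:R / ln p%:R))%:E
    <= upper_density (ln (q%:R : R) / ln p%:R) (Lambda_can p q))%E.
Proof.
have p1_gt0 : (0 : R) < p%:R - 1 by rewrite subr_gt0 ltr1n; lia.
have q1_gt0 : (0 : R) < q%:R - 1 by rewrite subr_gt0 ltr1n.
set s := ln _ / _; set c := 2 * _ / _.
have c_gt0 : 0 < c by rewrite divr_gt0 ?mulr_gt0.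
apply: le_ereal_inf_tmp => _ [H H_gt0 <-]; apply: le_ereal_sup_tmp.
pose n := (Num.truncn (c * H)).+1; pose P : R := (p ^ n)%:R.
pose lam := (q%:R - 1) * (P - 1) / (p%:R - 1).
have n_le : (n%:R : R) <= P by rewrite ler_nat ltnW // ltn_expl; lia.
have cH_lt : c * H < n%:R by rewrite truncnS_gt.
have rho_gt0 : 0 < P / c by rewrite divr_gt0 // ltr0n expn_gt0; apply/orP; left; lia.
exists ((count_ball (Lambda_can p q) (lam / 2) (P / c) / (P / c) `^ s)%:E).
  by exists (lam / 2, P / c) => //=; rewrite ler_pdivlMr // mulrC; lra.
rewrite lee_fin ler_pdivlMr ?powR_gt0 //.
have -> : c `^ s * (P / c) `^ s = (q ^ n)%:R.
  rewrite -powRM ?ltW // mulrCA mulfV ?gt_eqF // mulr1 /P natrX -powR_mulrn ?ler0n //.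
  by rewrite powRAC /s powR_lnratio ?powR_mulrn ?natrX //; lia.
apply: count_ball_can_ge => //.
have -> : 2 * (P / c) = (q%:R - 1) * P / (p%:R - 1) by rewrite /c; field; rewrite !gt_eqF.
by rewrite ltr_pM2r ?invr_gt0 // ltr_pM2l // ltrBlDr ltrDl.
Qed.

End LowerBound.

Theorem theorem1p5 (R : realType) (p q : nat) :
  (2 <= q)%N -> (q < p)%N -> (q %| p)%N ->
  let s : R := ln (q%:R) / ln (p%:R) in
  let bound : R := (2 * (p%:R - 1) / (q%:R - 1)) `^ s in
  (forall tau : seq nat -> int, regular_mapping p q tau ->
     (upper_density s (Lambda_tau p q tau) <= bound%:E)%E) /\
  upper_density s (Lambda_can p q) = bound%:E.
Proof.
move=> q_gt1 q_lt_p q_dvd_p s bound.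
have q_le_p := ltnW q_lt_p; have p_gt0 : (0 < p)%N by lia.
split.
  move=> tau [_ _ tau_digit _]; apply: upper_density_gap_le => // a b.
  exact: Lambda_tau_gap.
apply/le_anti/andP; split; last exact: upper_density_can_ge.
apply: upper_density_gap_le => // a b La Lb.
apply: Lambda_tau_gap (Lambda_can_sub La) (Lambda_can_sub Lb) => // w _.
by rewrite subrr dvdz0.
Qed.
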